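(* Let $\mathcal{X}$ (contexts), $\mathcal{A}$ (actions) and $\mathcal{Y}\subseteq\mathbb{R}$ (outcomes) be spaces, let $p(x)$ be a context density and $p(y\mid x,a)$ an outcome density. For a behaviour policy $\pi^b(a\mid x)$ and a target policy $\pi^*(a\mid x)$ define the joint densities $p_{\pi^b}(x,a,y)=p(y\mid x,a)\,\pi^b(a\mid x)\,p(x)$ and $p_{\pi^*}(x,a,y)=p(y\mid x,a)\,\pi^*(a\mid x)\,p(x)$, with $Y$-marginals $p_{\pi^b}(y)$ and $p_{\pi^*}(y)$. Assume $\pi^*(a\mid x)>0\Rightarrow \pi^b(a\mid x)>0$ for all $x,a$. Let $w(y)=p_{\pi^*}(y)/p_{\pi^b}(y)$ and $\rho(a,x)=\pi^*(a\mid x)/\pi^b(a\mid x)$. Then $w(y)=\mathbb{E}_{\pi^b}[\rho(A,X)\mid Y=y]$, and $$w=\arg\min_f \mathbb{E}_{\pi^b}\big[(\rho(A,X)-f(Y))^2\big].$$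
   Context: $\mathbb{E}_{\pi^b}$ denotes expectation with $(X,A,Y)\sim p_{\pi^b}(x,a,y)$. The minimum is over measurable functions $f:\mathcal{Y}\to\mathbb{R}$. *)

From HB Require Import structures.
From mathcomp Require Import all_boot all_order all_algebra.
From mathcomp Require Import all_classical all_reals all_analysis.
Set Implicit Arguments. Unset Strict Implicit. Unset Printing Implicit Defensive.
Import Order.TTheory GRing.Theory Num.Theory.
Local Open Scope classical_set_scope.
Local Open Scope ring_scope.

Section OPE.
Context {d1 d2 : measure_display} {X : measurableType d1} {A : measurableType d2}
  {R : realType}.

(* joint density p_pi(x,a,y) = p(y|x,a) pi(a|x) p(x), on (X * A) * R.
   pX x = p(x), pY x a y = p(y|x,a), pi x a = pi(a|x). *)
Definition joint_density (pX : X -> R) (pY : X -> A -> R -> R) (pi : X -> A -> R)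
  (z : (X * A) * R) : R :=
  pY z.1.1 z.1.2 z.2 * pi z.1.1 z.1.2 * pX z.1.1.

Definition Epi (muX : {measure set X -> \bar R}) (muA : {measure set A -> \bar R})
  (nu : {sigma_finite_measure set R -> \bar R})
  (pX : X -> R) (pY : X -> A -> R -> R) (pi : X -> A -> R)
  (h : (X * A) * R -> \bar R) : \bar R :=
  (\int[(muX \x muA) \x nu]_z (h z * (joint_density pX pY pi z)%:E))%E.

Definition marginal_Y (muX : {measure set X -> \bar R}) (muA : {measure set A -> \bar R})
  (pX : X -> R) (pY : X -> A -> R -> R) (pi : X -> A -> R) (y : R) : \bar R :=
  (\int[muX \x muA]_xa (pY xa.1 xa.2 y * pi xa.1 xa.2 * pX xa.1)%:E)%E.

Definition is_cond_exp_given_Y (E : ((X * A) * R -> \bar R) -> \bar R)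
  (h : (X * A) * R -> R) (g : R -> R) : Prop :=
  measurable_fun [set: R] g /\
  forall B : set R, measurable B ->
    E (fun z => (h z * \1_B z.2)%:E) = E (fun z => (g z.2 * \1_B z.2)%:E).

Definition rho_of (pis pib : X -> A -> R) (z : (X * A) * R) : R :=
  pis z.1.1 z.1.2 / pib z.1.1 z.1.2.

Definition w_of (muX : {measure set X -> \bar R}) (muA : {measure set A -> \bar R})
  (pX : X -> R) (pY : X -> A -> R -> R) (pis pib : X -> A -> R) (y : R) : R :=
  fine (marginal_Y muX muA pX pY pis y) / fine (marginal_Y muX muA pX pY pib y).

End OPE.

From HB Require Import structures.
From mathcomp Require Import all_boot all_order all_algebra.
From mathcomp Require Import all_classical all_reals all_analysis.
From mathcomp Require Import measurable_realfun ring.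
Import Order.TTheory GRing.Theory Num.Theory.
Local Open Scope classical_set_scope.
Local Open Scope ring_scope.

(* Write q_pi(x,a,y) = p(y|x,a) pi(a|x) p(x).  By Tonelli, an expectation under
   q_b is the nu-integral over y of a fibre integral over (x,a) against q_b(.,y).
   Since pi^b vanishes only where pi^* does, rho q_b = q_* pointwise, so the fibre
   integral of rho is p_*(y) = w(y) p_b(y): w(y) is the q_b(.,y)-weighted mean of
   rho.  Both marginals integrate to 1, hence are finite for nu-almost every y, and
   on such fibres both claims are facts about a weighted mean: multiplying by
   1_B(y) commutes with it, and it minimises the weighted squared deviation by the
   bias-variance identity
     \int (rho - c)^2 q = \int (rho - w)^2 q + (w - c)^2 \int q. *)

Lemma measurable_inv (R : realType) : measurable_fun [set: R] GRing.inv.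
Proof.
have -> : [set: R] = [set 0] `|` [set x | x != 0].
  by apply/seteqP; split => x // _; case: (eqVneq x 0) => [->|x0]; [left|right].
apply/measurable_funU => //.
  rewrite [X in measurable X](_ : _ = ~` [set (0:R)]); first exact: measurableC.
  by apply/seteqP; split => x /= /eqP.
split; first exact: measurable_fun_set1.
apply: open_continuous_measurable_fun; first exact: open_neq.
by move=> x /set_mem /= x0; exact: inv_continuous.
Qed.

Section nonneg_integral.
Context {d} {T : measurableType d} {R : realType} {mu : {measure set T -> \bar R}}.

Lemma ge0_integralZl_realfun (f : T -> R) (k : R) :
  measurable_fun setT f -> (forall x, 0 <= f x) -> 0 <= k ->
  (\int[mu]_x (k * f x)%:E = k%:E * \int[mu]_x (f x)%:E)%E.
Proof.
move=> mf f_ge0 k_ge0; under eq_integral do rewrite EFinM.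
by rewrite ge0_integralZl_EFin //; [move=> x _; rewrite lee_fin | exact/measurable_EFinP].
Qed.

Lemma ge0_integral_addZ_realfun (f g : T -> R) (k : R) :
  measurable_fun setT f -> measurable_fun setT g ->
  (forall x, 0 <= f x) -> (forall x, 0 <= g x) -> 0 <= k ->
  (\int[mu]_x (f x + k * g x)%:E = \int[mu]_x (f x)%:E + k%:E * \int[mu]_x (g x)%:E)%E.
Proof.
move=> mf mg f_ge0 g_ge0 k_ge0.
under eq_integral do rewrite EFinD.
rewrite ge0_integralD //= ?ge0_integralZl_realfun //.
- by move=> x _; rewrite lee_fin.
- exact/measurable_EFinP.
- by move=> x _; rewrite lee_fin mulr_ge0.
- by apply/measurable_EFinP; exact: measurable_funM.
Qed.

Section weighted_mean.
Context {r q : T -> R} {w M : R}.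
Hypotheses (r_meas : measurable_fun setT r) (q_meas : measurable_fun setT q).
Hypotheses (r_ge0 : forall x, 0 <= r x) (q_ge0 : forall x, 0 <= q x) (w_ge0 : 0 <= w).
Hypotheses (q_int : (\int[mu]_x (q x)%:E = M%:E)%E)
  (rq_int : (\int[mu]_x (r x * q x)%:E = (w * M)%:E)%E).

Let rq_meas : measurable_fun setT (fun x => r x * q x).
Proof. exact: measurable_funM. Qed.

Let rq_ge0 x : 0 <= r x * q x. Proof. exact: mulr_ge0. Qed.

Let wq_int : (\int[mu]_x (w * q x)%:E = (w * M)%:E)%E.
Proof. by rewrite ge0_integralZl_realfun // q_int. Qed.

Lemma integral_mulr_weighted_mean (k : R) : 0 <= k ->
  (\int[mu]_x (r x * k * q x)%:E = \int[mu]_x (w * k * q x)%:E)%E.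
Proof.
move=> k_ge0.
under eq_integral do rewrite mulrAC mulrC.
under [RHS]eq_integral do rewrite mulrAC mulrC.
rewrite ge0_integralZl_realfun // rq_int ge0_integralZl_realfun ?wq_int //.
- by apply: measurable_funM.
- by move=> x; rewrite mulr_ge0.
Qed.

Let sqr_dev_meas (c : R) : measurable_fun setT (fun x => (r x - c) ^+ 2 * q x).
Proof.
by apply: measurable_funM => //; apply: measurable_funX; exact: measurable_funB.
Qed.

Let sqr_dev_ge0 (c : R) x : 0 <= (r x - c) ^+ 2 * q x.
Proof. by rewrite mulr_ge0 // sqr_ge0. Qed.

(* [w q] and [r q] have the same finite integral [w M]: the signed cross term of
   the bias-variance identity is traded for multiples of these two nonnegative
   terms, which then cancel without subtracting possibly infinite integrals. *)
Let integral_add_mean_term (F g : T -> R) (k : R) :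
  g = (fun x => w * q x) \/ g = (fun x => r x * q x) ->
  measurable_fun setT F -> (forall x, 0 <= F x) -> 0 <= k ->
  (\int[mu]_x (F x + k * g x)%:E = \int[mu]_x (F x)%:E + (k * (w * M))%:E)%E.
Proof.
move=> g_mean mF F_ge0 k_ge0.
case: g_mean => ->; rewrite ge0_integral_addZ_realfun //.
- by rewrite wq_int.
- exact: measurable_funM.
- by move=> x; rewrite mulr_ge0.
- by rewrite rq_int.
Qed.

Lemma integral_sqr_sub_weighted_mean (c : R) :
  (\int[mu]_x ((r x - c) ^+ 2 * q x)%:E =
   \int[mu]_x ((r x - w) ^+ 2 * q x)%:E + ((w - c) ^+ 2 * M)%:E)%E.
Proof.
have dev_w_meas :
    measurable_fun setT (fun x => (r x - w) ^+ 2 * q x + (w - c) ^+ 2 * q x).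
  by apply: measurable_funD => //; exact: measurable_funM.
have dev_w_ge0 x : 0 <= (r x - w) ^+ 2 * q x + (w - c) ^+ 2 * q x.
  by rewrite addr_ge0 // mulr_ge0 // sqr_ge0.
have -> : (\int[mu]_x ((r x - w) ^+ 2 * q x)%:E + ((w - c) ^+ 2 * M)%:E =
           \int[mu]_x ((r x - w) ^+ 2 * q x + (w - c) ^+ 2 * q x)%:E)%E.
  by rewrite ge0_integral_addZ_realfun ?sqr_ge0 // q_int EFinM.
have mean_terms_cancel (g1 g2 : T -> R) (k : R) :
    g1 = (fun x => w * q x) \/ g1 = (fun x => r x * q x) ->
    g2 = (fun x => w * q x) \/ g2 = (fun x => r x * q x) -> 0 <= k ->
    (forall x, (r x - c) ^+ 2 * q x + k * g1 x =
               (r x - w) ^+ 2 * q x + (w - c) ^+ 2 * q x + k * g2 x) ->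
    (\int[mu]_x ((r x - c) ^+ 2 * q x)%:E =
     \int[mu]_x ((r x - w) ^+ 2 * q x + (w - c) ^+ 2 * q x)%:E)%E.
  move=> g1_mean g2_mean k_ge0 /funext/(congr1 (fun h => \int[mu]_x (h x)%:E)%E).
  rewrite integral_add_mean_term // integral_add_mean_term //.
  by move=> /(congr1 (fun e => e - (k * (w * M))%:E)%E); rewrite !addeK.
have [c_le_w | w_lt_c] := leP c w.
- apply: (mean_terms_cancel (fun x => w * q x) (fun x => r x * q x) (2 * (w - c)));
    [by left | by right | by rewrite mulr_ge0 // subr_ge0 | by move=> x; ring].
- apply: (mean_terms_cancel (fun x => r x * q x) (fun x => w * q x) (2 * (c - w)));
    [by right | by left | by rewrite mulr_ge0 // subr_ge0 ltW | by move=> x; ring].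
Qed.

Lemma le_integral_sqr_sub_weighted_mean (c : R) :
  (\int[mu]_x ((r x - w) ^+ 2 * q x)%:E <= \int[mu]_x ((r x - c) ^+ 2 * q x)%:E)%E.
Proof.
have M_ge0 : 0 <= M.
  by rewrite -lee_fin -q_int; apply: integral_ge0 => x _; rewrite lee_fin.
rewrite (integral_sqr_sub_weighted_mean c); apply: leeDl.
by rewrite lee_fin mulr_ge0 // sqr_ge0.
Qed.

End weighted_mean.
End nonneg_integral.

Section sigma_finite_product.
Context d1 d2 (T1 : measurableType d1) (T2 : measurableType d2) (R : realType).
Variables (m1 : {sigma_finite_measure set T1 -> \bar R})
  (m2 : {sigma_finite_measure set T2 -> \bar R}).

Lemma product_measure1_sigma_finite : sigma_finite setT (m1 \x m2)%E.
Proof.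
have /sigma_finiteP[F [UF ndF Ffin]] := sigma_finiteT m1.
have /sigma_finiteP[G [UG ndG Gfin]] := sigma_finiteT m2.
exists (fun n => F n `*` G n) => [|n].
  apply/seteqP; split => [[x y] _|//].
  have [i _ Fix] : (\bigcup_i F i) x by rewrite -UF.
  have [j _ Gjy] : (\bigcup_j G j) y by rewrite -UG.
  exists (maxn i j) => //; split.
  - exact: subsetPset (ndF _ _ (leq_maxl i j)) _ Fix.
  - exact: subsetPset (ndG _ _ (leq_maxr i j)) _ Gjy.
have [mFn Fn_fin] := Ffin n; have [mGn Gn_fin] := Gfin n.
split; first exact: measurableX.
by rewrite product_measure1E // lte_mul_pinfty // ge0_fin_numE.
Qed.

(* [m1 \x m2] already has a canonical sigma-finite structure reserved for
   subprobabilities, which blocks a general instance on it, hence the alias. *)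
Definition sigma_finite_product := (m1 \x m2)%E.

HB.instance Definition _ := Measure.on sigma_finite_product.
HB.instance Definition _ := Measure_isSigmaFinite.Build _ _ _ sigma_finite_product
  product_measure1_sigma_finite.

End sigma_finite_product.
Arguments sigma_finite_product {d1 d2 T1 T2 R} m1 m2.

Section joint_density.
Context d1 d2 (X : measurableType d1) (A : measurableType d2) (R : realType).
Variables (muX : {sigma_finite_measure set X -> \bar R})
  (muA : {sigma_finite_measure set A -> \bar R})
  (nu : {sigma_finite_measure set R -> \bar R})
  (pX : X -> R) (pY : X -> A -> R -> R).
Hypotheses (pX_ge0 : forall x, 0 <= pX x) (pX_meas : measurable_fun [set: X] pX)
  (pX_int1 : (\int[muX]_x (pX x)%:E = 1)%E).
Hypotheses (pY_ge0 : forall x a y, 0 <= pY x a y)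
  (pY_meas : measurable_fun [set: (X * A) * R] (fun z => pY z.1.1 z.1.2 z.2))
  (pY_int1 : forall x a, (\int[nu]_y (pY x a y)%:E = 1)%E).

Section policy.
Variable pi : X -> A -> R.
Hypotheses (pi_ge0 : forall x a, 0 <= pi x a)
  (pi_meas : measurable_fun [set: X * A] (fun xa => pi xa.1 xa.2)).

Local Notation q := (joint_density pX pY pi).

Lemma measurable_joint_density : measurable_fun setT q.
Proof.
apply: measurable_funM; first apply: measurable_funM => //.
- exact: measurableT_comp pi_meas measurable_fst.
- exact: measurableT_comp pX_meas (measurableT_comp measurable_fst measurable_fst).
Qed.

Lemma joint_density_ge0 z : 0 <= q z.
Proof. by rewrite !mulr_ge0. Qed.

Section fibre.
Variable h : (X * A) * R -> R.
Hypotheses (h_meas : measurable_fun setT h) (h_ge0 : forall z, 0 <= h z).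

Let hq_meas : measurable_fun setT (fun z => (h z * q z)%:E).
Proof.
by apply/measurable_EFinP; apply: measurable_funM => //; exact: measurable_joint_density.
Qed.

Let hq_ge0 z : (0 <= (h z * q z)%:E)%E.
Proof. by rewrite lee_fin mulr_ge0 // joint_density_ge0. Qed.

Lemma Epi_iterated : Epi muX muA nu pX pY pi (fun z => (h z)%:E) =
  (\int[nu]_y \int[(muX \x muA)%E]_xa (h (xa, y) * q (xa, y))%:E)%E.
Proof.
rewrite /Epi; under eq_integral do rewrite -EFinM.
exact: (fubini_tonelli2 (m1 := sigma_finite_product muX muA) _ hq_meas hq_ge0).
Qed.

Lemma measurable_fibre_integral :
  measurable_fun setT (fun y => \int[(muX \x muA)%E]_xa (h (xa, y) * q (xa, y))%:E)%E.
Proof.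
exact: (measurable_fun_fubini_tonelli_G (m1 := sigma_finite_product muX muA)
  _ hq_meas hq_ge0).
Qed.

Lemma fibre_integral_ge0 y :
  (0 <= \int[(muX \x muA)%E]_xa (h (xa, y) * q (xa, y))%:E)%E.
Proof. by apply: integral_ge0 => xa _; rewrite hq_ge0. Qed.

End fibre.

Section fibrewise_comparison.
Variables h1 h2 : (X * A) * R -> R.
Hypotheses (h1_meas : measurable_fun setT h1) (h1_ge0 : forall z, 0 <= h1 z).
Hypotheses (h2_meas : measurable_fun setT h2) (h2_ge0 : forall z, 0 <= h2 z).

Lemma le_Epi_fibrewise :
  {ae nu, forall y, \int[(muX \x muA)%E]_xa (h1 (xa, y) * q (xa, y))%:E <=
                    \int[(muX \x muA)%E]_xa (h2 (xa, y) * q (xa, y))%:E}%E ->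
  (Epi muX muA nu pX pY pi (fun z => (h1 z)%:E) <=
   Epi muX muA nu pX pY pi (fun z => (h2 z)%:E))%E.
Proof.
move=> le12; rewrite !Epi_iterated //.
apply: ae_ge0_le_integral => //; do ?[by move=> y _; exact: fibre_integral_ge0
                                  |exact: measurable_fibre_integral].
by apply: filterS le12 => y + _.
Qed.

Lemma eq_Epi_fibrewise :
  {ae nu, forall y, \int[(muX \x muA)%E]_xa (h1 (xa, y) * q (xa, y))%:E =
                    \int[(muX \x muA)%E]_xa (h2 (xa, y) * q (xa, y))%:E}%E ->
  Epi muX muA nu pX pY pi (fun z => (h1 z)%:E) =
  Epi muX muA nu pX pY pi (fun z => (h2 z)%:E).
Proof.
move=> eq12; rewrite !Epi_iterated //.
apply: ae_eq_integral => //; do ?exact: measurable_fibre_integral.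
by apply: filterS eq12 => y + _.
Qed.

End fibrewise_comparison.

Lemma measurable_marginal_Y : measurable_fun setT (marginal_Y muX muA pX pY pi).
Proof.
apply: (measurable_fun_fubini_tonelli_G (m1 := sigma_finite_product muX muA)
  (fun z => (q z)%:E)).
- by apply/measurable_EFinP; exact: measurable_joint_density.
- by move=> z; rewrite lee_fin joint_density_ge0.
Qed.

Lemma marginal_Y_ge0 y : (0 <= marginal_Y muX muA pX pY pi y)%E.
Proof. by apply: integral_ge0 => xa _; rewrite lee_fin (joint_density_ge0 (xa, y)). Qed.

Hypothesis pi_int1 : forall x, (\int[muA]_a (pi x a)%:E = 1)%E.

Lemma integral_policy_density :
  (\int[(muX \x muA)%E]_xa (pi xa.1 xa.2 * pX xa.1)%:E = 1)%E.
Proof.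
have pi_pX_meas : measurable_fun setT (fun xa : X * A => (pi xa.1 xa.2 * pX xa.1)%:E).
  apply/measurable_EFinP; apply: measurable_funM => //.
  exact: measurableT_comp pX_meas measurable_fst.
rewrite (fubini_tonelli1 _ pi_pX_meas); last by move=> xa; rewrite lee_fin mulr_ge0.
rewrite -pX_int1; apply: eq_integral => x _; rewrite /fubini_F /=.
under eq_integral do rewrite mulrC.
rewrite ge0_integralZl_realfun // ?pi_int1 ?mule1 //.
exact: measurable_fun_pair2 x pi_meas.
Qed.

Lemma integral_marginal_Y : (\int[nu]_y marginal_Y muX muA pX pY pi y = 1)%E.
Proof.
have q_meas : measurable_fun setT (fun z => (q z)%:E).
  by apply/measurable_EFinP; exact: measurable_joint_density.
have q_ge0 z : (0 <= (q z)%:E)%E by rewrite lee_fin joint_density_ge0.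
transitivity (\int[(sigma_finite_product muX muA \x nu)%E]_z (q z)%:E)%E.
  by rewrite (fubini_tonelli2 _ q_meas q_ge0).
rewrite (fubini_tonelli1 _ q_meas q_ge0) -integral_policy_density.
apply: eq_integral => xa _; rewrite /fubini_F /joint_density /=.
under eq_integral do rewrite -mulrA mulrC.
rewrite ge0_integralZl_realfun ?pY_int1 ?mule1 ?mulr_ge0 //.
exact: measurable_fun_pair2 xa pY_meas.
Qed.

Lemma marginal_Y_fin_num : {ae nu, forall y, marginal_Y muX muA pX pY pi y \is a fin_num}.
Proof.
have : nu.-integrable setT (marginal_Y muX muA pX pY pi).
  apply/integrableP; split; first exact: measurable_marginal_Y.
  under eq_integral do rewrite gee0_abs ?marginal_Y_ge0 //.
  by rewrite integral_marginal_Y ltry.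
by move=> /(integrable_ae measurableT); apply: filterS => y; apply.
Qed.
End policy.

Section importance_ratio.
Variables pib pis : X -> A -> R.
Hypotheses (pib_ge0 : forall x a, 0 <= pib x a)
  (pib_meas : measurable_fun [set: X * A] (fun xa => pib xa.1 xa.2))
  (pib_int1 : forall x, (\int[muA]_a (pib x a)%:E = 1)%E).
Hypotheses (pis_ge0 : forall x a, 0 <= pis x a)
  (pis_meas : measurable_fun [set: X * A] (fun xa => pis xa.1 xa.2))
  (pis_int1 : forall x, (\int[muA]_a (pis x a)%:E = 1)%E).
Hypothesis support : forall x a, 0 < pis x a -> 0 < pib x a.

Local Notation qb := (joint_density pX pY pib).
Local Notation qs := (joint_density pX pY pis).
Local Notation pb := (marginal_Y muX muA pX pY pib).
Local Notation ps := (marginal_Y muX muA pX pY pis).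
Local Notation w := (w_of muX muA pX pY pis pib).

Let ratio (xa : X * A) := pis xa.1 xa.2 / pib xa.1 xa.2.

Let ratio_meas : measurable_fun setT ratio.
Proof.
exact: measurable_funM pis_meas (measurableT_comp (@measurable_inv R) pib_meas).
Qed.

Let ratio_ge0 xa : 0 <= ratio xa.
Proof. exact: divr_ge0. Qed.

Let qb_fibre_meas y : measurable_fun setT (fun xa => qb (xa, y)).
Proof. exact: measurable_fun_pair1 y (measurable_joint_density _ pib_meas). Qed.

Let qb_fibre_ge0 y xa : 0 <= qb (xa, y).
Proof. exact: joint_density_ge0. Qed.

(* The junk value [pis / 0 = 0] is harmless: [pis] vanishes wherever [pib] does. *)
Lemma ratio_mul_joint_density xa y : ratio xa * qb (xa, y) = qs (xa, y).
Proof.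
rewrite /ratio /joint_density /=.
have [pib0 | pib_neq0] := eqVneq (pib xa.1 xa.2) 0; last by field.
have pis0 : pis xa.1 xa.2 = 0.
  apply/eqP; rewrite eq_le pis_ge0 andbT leNgt; apply/negP => /support.
  by rewrite pib0 ltxx.
by rewrite pib0 pis0 !(mulr0, mul0r).
Qed.

Lemma marginal_Y_eq0 y : pb y = 0%E -> ps y = 0%E.
Proof.
move=> pb0.
have qb_meas : measurable_fun setT (fun xa => (qb (xa, y))%:E).
  by apply/measurable_EFinP; exact: qb_fibre_meas.
have qb_ae0 : ae_eq (muX \x muA)%E setT (fun xa => (qb (xa, y))%:E) (cst 0%E).
  apply/(ae_eq_integral_abs _ measurableT qb_meas).
  rewrite -pb0; apply: eq_integral => xa _.
  by rewrite gee0_abs // lee_fin.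
rewrite -(integral0 (muX \x muA)%E setT); apply: ae_eq_integral => //.
  apply/measurable_EFinP.
  exact: measurable_fun_pair1 y (measurable_joint_density _ pis_meas).
apply: filterS qb_ae0 => xa /(_ I) [qb0] _.
by rewrite -[LHS]/((qs (xa, y))%:E) -ratio_mul_joint_density qb0 mulr0.
Qed.

Lemma w_of_ge0 y : 0 <= w y.
Proof. by rewrite /w_of divr_ge0 // fine_ge0 // marginal_Y_ge0. Qed.

Lemma measurable_w_of : measurable_fun setT w.
Proof.
apply: measurable_funM.
  by apply: measurableT_comp => //; exact: measurable_marginal_Y.
apply: measurableT_comp (@measurable_inv R) _.
by apply: measurableT_comp => //; exact: measurable_marginal_Y.
Qed.

Lemma ratio_fibre_mean y : pb y \is a fin_num -> ps y \is a fin_num ->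
  (\int[(muX \x muA)%E]_xa (qb (xa, y))%:E = (fine (pb y))%:E)%E /\
  (\int[(muX \x muA)%E]_xa (ratio xa * qb (xa, y))%:E = (w y * fine (pb y))%:E)%E.
Proof.
move=> pb_fin ps_fin; split; first by rewrite fineK.
under eq_integral do rewrite ratio_mul_joint_density.
rewrite -[LHS]/(ps y) -(fineK ps_fin); congr EFin.
rewrite /w_of; have [pb0 | pb_neq0] := eqVneq (fine (pb y)) 0; last by rewrite divfK.
by rewrite pb0 mulr0 marginal_Y_eq0 // -(fineK pb_fin) pb0.
Qed.

Let marginals_fin_num : {ae nu, forall y, pb y \is a fin_num /\ ps y \is a fin_num}.
Proof.
apply: filterS2 (marginal_Y_fin_num _ pib_ge0 pib_meas pib_int1)
  (marginal_Y_fin_num _ pis_ge0 pis_meas pis_int1).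
by move=> y pb_fin ps_fin.
Qed.

Lemma ratio_cond_exp_given_Y :
  is_cond_exp_given_Y (Epi muX muA nu pX pY pib) (rho_of pis pib) w.
Proof.
split=> [|B mB]; first exact: measurable_w_of.
have indic_meas : measurable_fun setT (fun z : (X * A) * R => \1_B z.2 : R).
  exact: measurableT_comp (measurable_indic mB) measurable_snd.
have indic_ge0 t : 0 <= \1_B t :> R by rewrite indicE.
apply: eq_Epi_fibrewise => //.
- exact: measurable_funM (measurableT_comp ratio_meas measurable_fst) indic_meas.
- by move=> z; rewrite mulr_ge0 ?(ratio_ge0 z.1).
- exact: measurable_funM (measurableT_comp measurable_w_of measurable_snd) indic_meas.
- by move=> z; rewrite mulr_ge0 ?w_of_ge0.
apply: filterS marginals_fin_num => y [pb_fin ps_fin].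
have [qb_int ratio_int] := ratio_fibre_mean y pb_fin ps_fin.
exact: (integral_mulr_weighted_mean ratio_meas (qb_fibre_meas y) ratio_ge0
  (qb_fibre_ge0 y) (w_of_ge0 y) qb_int ratio_int (\1_B y) (indic_ge0 y)).
Qed.

Lemma w_of_minimizes (f : R -> R) : measurable_fun setT f ->
  (Epi muX muA nu pX pY pib (fun z => ((rho_of pis pib z - w z.2) ^+ 2)%:E) <=
   Epi muX muA nu pX pY pib (fun z => ((rho_of pis pib z - f z.2) ^+ 2)%:E))%E.
Proof.
move=> f_meas.
have sqr_dev_meas (g : R -> R) : measurable_fun setT g ->
    measurable_fun setT (fun z : (X * A) * R => (rho_of pis pib z - g z.2) ^+ 2).
  move=> g_meas; apply: measurable_funX; apply: measurable_funB.
    exact: measurableT_comp ratio_meas measurable_fst.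
  exact: measurableT_comp g_meas measurable_snd.
apply: (le_Epi_fibrewise _ pib_ge0 pib_meas _ _ (sqr_dev_meas _ measurable_w_of) _
  (sqr_dev_meas _ f_meas)); do ?by move=> z; rewrite sqr_ge0.
apply: filterS marginals_fin_num => y [pb_fin ps_fin].
have [qb_int ratio_int] := ratio_fibre_mean y pb_fin ps_fin.
exact: (le_integral_sqr_sub_weighted_mean ratio_meas (qb_fibre_meas y) ratio_ge0
  (qb_fibre_ge0 y) (w_of_ge0 y) qb_int ratio_int (f y)).
Qed.

End importance_ratio.
End joint_density.

Theorem lemma2p1 (d1 d2 : measure_display) (X : measurableType d1)
  (A : measurableType d2) (R : realType)
  (muX : {sigma_finite_measure set X -> \bar R})
  (muA : {sigma_finite_measure set A -> \bar R})
  (nu : {sigma_finite_measure set R -> \bar R})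
  (pX : X -> R) (pY : X -> A -> R -> R) (pib pis : X -> A -> R)
  (pX_ge0 : forall x, 0 <= pX x)
  (pX_meas : measurable_fun [set: X] pX)
  (pX_int1 : (\int[muX]_x (pX x)%:E = 1)%E)
  (pY_ge0 : forall x a y, 0 <= pY x a y)
  (pY_meas : measurable_fun [set: (X * A) * R] (fun z => pY z.1.1 z.1.2 z.2))
  (pY_int1 : forall x a, (\int[nu]_y (pY x a y)%:E = 1)%E)
  (pib_ge0 : forall x a, 0 <= pib x a)
  (pib_meas : measurable_fun [set: X * A] (fun xa => pib xa.1 xa.2))
  (pib_int1 : forall x, (\int[muA]_a (pib x a)%:E = 1)%E)
  (pis_ge0 : forall x a, 0 <= pis x a)
  (pis_meas : measurable_fun [set: X * A] (fun xa => pis xa.1 xa.2))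
  (pis_int1 : forall x, (\int[muA]_a (pis x a)%:E = 1)%E)
  (support : forall x a, 0 < pis x a -> 0 < pib x a) :
  let E := Epi muX muA nu pX pY pib in
  let rho := rho_of pis pib in
  let w := w_of muX muA pX pY pis pib in
  is_cond_exp_given_Y E rho w /\
  (forall f : R -> R, measurable_fun [set: R] f ->
     (E (fun z => ((rho z - w z.2) ^+ 2)%:E) <=
      E (fun z => ((rho z - f z.2) ^+ 2)%:E))%E).
Proof.
move=> E rho w; split; first exact: ratio_cond_exp_given_Y.
by move=> f f_meas; apply: w_of_minimizes.
Qed.
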